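(* In the setting of a sequential changepoint problem with observations $X_1,X_2,\ldots$ independent, $X_t\sim P_{\theta_0}$ for $t\le T$ and $X_t\sim P_{\theta_1}$ for $t>T$, where $\theta_0\ne\theta_1\in\Theta$, $(\Theta,d)$ a metric space, suppose that $T<\infty$ and the pre-change parameter $\theta_0$ is known, and let $\tau$ be the stopping time of the BCS-Detector built from level-$(1-\alpha)$ confidence sequences with pointwise width $w(\cdot,\theta,\alpha)$. Then $$\mathbb{E}_T[(\tau-T)^+]\le\frac{3}{1-\alpha}\,t_0(\theta_0,\theta_1),$$ where $t_0(\theta_0,\theta_1):=\min\{t\ge1:\ w(t,\theta_1,\alpha)<d(\theta_1,\theta_0)\}$.
   Context: $\mathbb{E}_T$ denotes expectation when the change occurs at time $T$. A level-$(1-\alpha)$ confidence sequence is a sequence of sets $C_t\subset\Theta$, $C_t$ being $\sigma(X_1,\ldots,X_t)$-measurable, with $\mathbb{P}(\forall t:\theta\in C_t)\ge1-\alpha$ under i.i.d. data from $P_\theta$. For each $n\ge1$ a backward confidence sequence $\{B^{(n)}_t\}_{t\in[n]}$ is obtained by applying the same construction to the reversed data $X_n,X_{n-1},\ldots,X_1$ and re-indexing, so that $B^{(n)}_t$ is $\sigma(X_t,\ldots,X_n)$-measurable, with $\mathbb{P}(\forall t\in[n]:\theta\in B^{(n)}_t)\ge1-\alpha$ under i.i.d. data from $P_\theta$; all CSs are nested ($C_t\subset C_s$ and $B^{(n)}_s\subset B^{(n)}_t$ for $s<t$). Knowledge of $\theta_0$ means the forward sets contain $\theta_0$ for all $t<T$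 with probability one (e.g. $C_t=\{\theta_0\}$). The BCS-Detector stops at $\tau=\inf\{n\ge1: C_n\cap B^{(n)}_1=\emptyset\}$. A function $w(t,\theta,\alpha)$ is a pointwise width if the confidence set built from $t$ i.i.d. observations from $P_\theta$ satisfies $\sup_{\theta'\in C_t}d(\theta,\theta')\le w(t,\theta,\alpha)$. *)

From HB Require Import structures.
From mathcomp Require Import all_boot all_order all_algebra.
From mathcomp Require Import all_classical all_reals all_analysis.
Set Implicit Arguments. Unset Strict Implicit. Unset Printing Implicit Defensive.
Import Order.TTheory GRing.Theory Num.Theory.
Import numFieldNormedType.Exports.
Local Open Scope classical_set_scope.
Local Open Scope ring_scope.

Section Defs.
Context {R : realType}.

Definition is_metric (Theta : Type) (d : Theta -> Theta -> R) : Prop :=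
  [/\ forall x y, 0 <= d x y,
      forall x y, d x y = 0 <-> x = y,
      forall x y, d x y = d y x &
      forall x y z, d x z <= d x y + d y z].

Context {dX : measure_display} {X : measurableType dX}.

(* Observations are indexed from 0: Y i is the (i+1)-th observation X_{i+1}. *)
Definition obs_prefix {dO} {Omega : measurableType dO}
  (Y : nat -> Omega -> X) (n : nat) (w : Omega) : seq X :=
  [seq Y i w | i <- iota 0 n].

Definition mutually_independent {dO} {Omega : measurableType dO}
  (P : probability Omega R) (Y : nat -> Omega -> X) : Prop :=
  forall I : seq nat, uniq I ->
  forall A : nat -> set X, (forall i, measurable (A i)) ->
  P (\bigcap_(i in [set` I]) (Y i @^-1` A i)) =
  (\prod_(i <- I) P (Y i @^-1` A i))%E.

Definition iid_with_law {dO} {Omega : measurableType dO}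
  (P : probability Omega R) (Y : nat -> Omega -> X) (Q : probability X R) : Prop :=
  [/\ forall i, measurable_fun [set: Omega] (Y i),
      mutually_independent P Y &
      forall i A, measurable A -> P (Y i @^-1` A) = Q A].

(* A confidence-set construction: CS xs is the confidence set computed from
   the data xs = [x_1; ...; x_t] (in this order).  Forward CS: C_t =
   CS [X_1;...;X_t]; backward CS: B^(n)_t = CS [X_n; X_{n-1}; ...; X_t]. *)

Definition CS_measurable (Theta : Type) (d : Theta -> Theta -> R)
  (CS : seq X -> set Theta) : Prop :=
  forall (n : nat) (th : Theta),
    measurable [set x : n.-tuple X | CS (tval x) th] /\
    forall r : R, measurable [set x : n.-tuple X |
                              forall th', CS (tval x) th' -> d th th' <= r].

Definition CS_nested (Theta : Type) (CS : seq X -> set Theta) : Prop :=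
  forall xs ys, CS (xs ++ ys) `<=` CS xs.

Definition CS_level (Theta : Type) (Pth : Theta -> probability X R)
  (CS : seq X -> set Theta) (alpha : R) : Prop :=
  forall (th : Theta) (dO : measure_display) (Omega : measurableType dO)
         (Q : probability Omega R) (Y : nat -> Omega -> X),
    iid_with_law Q Y (Pth th) ->
    ((1 - alpha)%:E <= Q [set w | forall t, CS (obs_prefix Y t.+1 w) th])%E.

Definition pointwise_width (Theta : Type) (d : Theta -> Theta -> R)
  (Pth : Theta -> probability X R) (CS : seq X -> set Theta)
  (wd : nat -> Theta -> R -> R) (alpha : R) : Prop :=
  forall (th : Theta) (t : nat), (1 <= t)%N ->
  forall (dO : measure_display) (Omega : measurableType dO)
         (Q : probability Omega R) (Y : nat -> Omega -> X),
    iid_with_law Q Y (Pth th) ->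
    ((1 - alpha)%:E <= Q [set w | forall th', CS (obs_prefix Y t w) th' ->
                                   (d th th' <= wd t th alpha)%R])%E.

(* t_0(theta0, theta1) = min {t >= 1 : w(t, theta1, alpha) < d(theta1, theta0)}
   (= +oo if the set is empty) *)
Definition t0 (Theta : Type) (d : Theta -> Theta -> R)
  (wd : nat -> Theta -> R -> R) (alpha : R) (th0 th1 : Theta) : \bar R :=
  ereal_inf [set (t%:R)%:E | t in [set t : nat |
               (1 <= t)%N /\ wd t th1 alpha < d th1 th0]].

(* BCS-Detector with known pre-change parameter (C_n = {theta0}):
   tau = inf {n >= 1 : C_n `&` B^(n)_1 = set0}, B^(n)_1 = CS [X_n;...;X_1]. *)
Definition bcs_tau (Theta : Type) (CS : seq X -> set Theta) (th0 : Theta)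
  {dO} {Omega : measurableType dO} (Y : nat -> Omega -> X) (w : Omega) : \bar R :=
  ereal_inf [set (n%:R)%:E | n in [set n : nat | (1 <= n)%N /\
     [set th0] `&` CS (rev (obs_prefix Y n w)) = set0]].

Definition delay (Theta : Type) (CS : seq X -> set Theta) (th0 : Theta)
  {dO} {Omega : measurableType dO} (Y : nat -> Omega -> X) (T : nat)
  (w : Omega) : \bar R :=
  Order.max (bcs_tau CS th0 Y w - (T%:R)%:E)%E 0%E.

End Defs.

From HB Require Import structures.
From mathcomp Require Import all_boot all_order all_algebra.
From mathcomp Require Import all_classical all_reals all_analysis.
From mathcomp Require Import zify lra measurable_realfun.
Import Order.TTheory GRing.Theory Num.Theory.
Import numFieldNormedType.Exports.
Local Open Scope classical_set_scope.
Local Open Scope ring_scope.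

(* Fix t >= 1 with w(t, th1, alpha) < d(th1, th0) and cut the post-change
   observations into consecutive blocks of length t.  With probability at
   least 1 - alpha, the confidence set computed from one block read backwards
   stays within w(t, th1, alpha) of th1, hence misses th0; by nestedness so
   does the backward set B^(n)_1 at the end n of that block, and the detector
   has stopped.  Blocks are independent, so the first k blocks all fail with
   probability at most alpha^k, and (tau - T)^+ <= t * sum_k 1{the first k
   blocks fail} has expectation at most t / (1 - alpha).  Taking t = t_0 gives
   a bound three times smaller than the claimed one; only nestedness, the
   width guarantee and the post-change law are needed. *)

Section indep_pi_sigma.
Local Open Scope ereal_scope.
Context {R : realType} {dO : measure_display} {Omega : measurableType dO}
  (P : probability Omega R).

(* Both sides of the product rule are finite measures in [B] that agree on
   the pi-system [G]. *)
Lemma indep_pi_sigma_l (G : set (set Omega)) (C : set Omega) :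
  G `<=` measurable -> G setT -> setI_closed G -> measurable C ->
  (forall B, G B -> P (B `&` C) = P B * P C) ->
  forall B, <<s G >> B -> P (B `&` C) = P B * P C.
Proof.
move=> Gm GT GI mC GC.
have PC_ge0 : (0 <= fine (P C))%R by apply: fine_ge0.
have PC_fin : P C \is a fin_num by rewrite fin_num_measure.
pose scaled := mscale (NngNum PC_ge0) P.
have scaledE B : scaled B = P B * P C by rewrite /scaled /mscale /= fineK // muleC.
move=> B GB; rewrite -scaledE.
apply: (@g_sigma_algebra_measure_unique _ R Omega G Gm (fun=> setT) (fun=> GT) _
  (mrestr P mC) scaled GI) => //.
- by apply/seteqP; split => // x _; exists 0%N.
- by move=> A GA; rewrite [RHS]scaledE -GC.
- move=> _; change (P ([set: Omega] `&` C) < +oo); rewrite setTI.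
  exact: le_lt_trans (probability_le1 P mC) (ltry 1%R).
Qed.

Lemma indep_pi_sigma (G1 G2 : set (set Omega)) :
  G1 `<=` measurable -> G1 setT -> setI_closed G1 ->
  G2 `<=` measurable -> G2 setT -> setI_closed G2 ->
  (forall B C, G1 B -> G2 C -> P (B `&` C) = P B * P C) ->
  forall B C, <<s G1 >> B -> <<s G2 >> C -> P (B `&` C) = P B * P C.
Proof.
move=> G1m G1T G1I G2m G2T G2I G12 B C sB sC.
have mB := smallest_sub (@sigma_algebra_measurable _ Omega) G1m sB.
have BG2 C' : G2 C' -> P (B `&` C') = P B * P C'.
  move=> GC'; apply: (indep_pi_sigma_l G1 C' G1m G1T G1I (G2m _ GC')) => // B' GB'.
  exact: G12.
rewrite setIC muleC; apply: (indep_pi_sigma_l G2 B G2m G2T G2I mB) => // C' GC'.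
by rewrite setIC muleC; exact: BG2.
Qed.

End indep_pi_sigma.

Section cylinder.
Local Open Scope ereal_scope.
Context {R : realType} {dO : measure_display} {Omega : measurableType dO}
  (P : probability Omega R) {dX : measure_display} {X : measurableType dX}
  (Y : nat -> Omega -> X) (mY : forall i, measurable_fun [set: Omega] (Y i)).

Definition cylinder (I : seq nat) : set (set Omega) :=
  [set B | exists2 A : nat -> set X, (forall i, measurable (A i)) &
     B = \bigcap_(i in [set` I]) (Y i @^-1` A i)].

Lemma measurable_process_preimage k (A : set X) :
  measurable A -> measurable (Y k @^-1` A).
Proof. by move=> mA; rewrite -[X in measurable X]setTI; exact: mY. Qed.

Lemma cylinder_measurable I : cylinder I `<=` measurable.
Proof.
move=> _ [A mA ->]; apply: bigcap_measurableType => k _.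
exact: measurable_process_preimage.
Qed.

Lemma cylinder_setT I : cylinder I setT.
Proof. by exists (fun=> setT) => //; apply/seteqP; split => x // _ i _. Qed.

Lemma cylinder_setI_closed I : setI_closed (cylinder I).
Proof.
move=> _ _ [A mA ->] [A' mA' ->].
exists (fun i => A i `&` A' i); first by move=> i; exact: measurableI.
apply/seteqP; split => x; first by move=> [h h'] i Ii; split; [exact: h|exact: h'].
by move=> h; split => i Ii; have [] := h i Ii.
Qed.

Lemma cylinder_sub I J : {subset I <= J} -> cylinder I `<=` cylinder J.
Proof.
move=> IJ _ [A mA ->].
exists (fun k => if k \in I then A k else setT); first by move=> k; case: ifP.
apply/seteqP; split => x h k /=.
  by move=> _; case: ifP => // kI; exact: h.
by move=> kI; have := h k (IJ _ kI); rewrite /= kI.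
Qed.

Lemma cylinder_preimage I k (A : set X) : k \in I -> measurable A ->
  cylinder I (Y k @^-1` A).
Proof.
move=> kI mA; exists (fun i => if i == k then A else setT).
  by move=> i; case: ifP.
apply/seteqP; split => x h /=; last by have := h k kI; rewrite /= eqxx.
by move=> i _; case: eqP => // ->.
Qed.

Lemma sigma_cylinder_measurable I : <<s cylinder I >> `<=` measurable.
Proof.
exact: smallest_sub (@sigma_algebra_measurable _ Omega) (@cylinder_measurable I).
Qed.

Lemma sigma_cylinder_sub I J :
  {subset I <= J} -> <<s cylinder I >> `<=` <<s cylinder J >>.
Proof. by move=> IJ; apply: sub_sigma_algebra2; exact: cylinder_sub. Qed.

Hypothesis Y_indep : mutually_independent P Y.

Lemma mutually_independent_reindex (f g : nat -> nat) : cancel f g ->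
  mutually_independent P (fun i => Y (f i)).
Proof.
move=> fK I uI A mA.
have ufI : uniq (map f I) by rewrite map_inj_uniq //; exact: can_inj fK.
have := Y_indep _ ufI _ (fun k => mA (g k)).
rewrite big_map; under eq_bigr do rewrite fK.
move=> <-; congr (P _); apply/seteqP; split => x /= h.
  by move=> _ /mapP [i iI ->]; rewrite /= fK; exact: h.
by move=> i iI; have := h (f i); rewrite /= fK; apply; exact: map_f.
Qed.

Lemma cylinder_indep I J B C : uniq I -> uniq J -> [predI I & J] =1 pred0 ->
  cylinder I B -> cylinder J C -> P (B `&` C) = P B * P C.
Proof.
move=> uI uJ IJ0 [A mA ->] [A' mA' ->].
have notJ i : i \in I -> i \notin J.
  by move=> iI; apply/negP => iJ; have := IJ0 i; rewrite /= iI iJ.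
pose AA k := if k \in I then A k else A' k.
have mAA k : measurable (AA k) by rewrite /AA; case: ifP.
have AA_J i : i \in J -> AA i = A' i.
  by move=> iJ; rewrite /AA; case: ifP => // /notJ; rewrite iJ.
have uIJ : uniq (I ++ J).
  rewrite cat_uniq uI uJ /= andbT; apply/hasPn => j jJ.
  by apply/negP => /notJ; rewrite jJ.
have -> : (\bigcap_(i in [set` I]) (Y i @^-1` A i)) `&`
          (\bigcap_(i in [set` J]) (Y i @^-1` A' i)) =
          \bigcap_(i in [set` I ++ J]) (Y i @^-1` AA i).
  apply/seteqP; split => x.
    move=> [hI hJ] i /=; rewrite mem_cat => /orP[iI|iJ].
      by rewrite /AA iI; exact: hI.
    by rewrite AA_J //; exact: hJ.
  move=> h; split => i /= iK; have := h i; rewrite /= mem_cat iK ?orbT //.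
    by rewrite /AA iK; apply.
  by rewrite AA_J //; apply.
rewrite (Y_indep _ uIJ _ mAA) (Y_indep _ uI _ mA) (Y_indep _ uJ _ mA') big_cat /=.
congr (_ * _); apply: eq_big_seq => i iK; last by rewrite AA_J.
by rewrite /AA iK.
Qed.

Lemma sigma_cylinder_indep I J B C : uniq I -> uniq J -> [predI I & J] =1 pred0 ->
  <<s cylinder I >> B -> <<s cylinder J >> C -> P (B `&` C) = P B * P C.
Proof.
move=> uI uJ IJ0; apply: indep_pi_sigma.
- exact: cylinder_measurable.
- exact: cylinder_setT.
- exact: cylinder_setI_closed.
- exact: cylinder_measurable.
- exact: cylinder_setT.
- exact: cylinder_setI_closed.
- by move=> B' C'; exact: cylinder_indep.
Qed.

End cylinder.

Lemma preimage_tuple_sigma {dO : measure_display} {Omega : measurableType dO}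
  (G : set (set Omega)) {dX : measure_display} {X : measurableType dX} n
  (F : Omega -> n.-tuple X) (S : set (n.-tuple X)) :
  (forall (i : 'I_n) A, measurable A -> G ((fun w => tnth (F w) i) @^-1` A)) ->
  measurable S -> <<s G >> (F @^-1` S).
Proof.
move=> GF mS.
have mF : measurable_fun [set: g_sigma_algebraType G]
    (F : g_sigma_algebraType G -> n.-tuple X).
  apply/measurable_fun_tnthP => i _ A mA; rewrite setTI.
  by apply: sub_sigma_algebra; exact: GF.
by have := mF measurableT _ mS; rewrite setTI.
Qed.

(* The integral of a nonnegative function is a supremum over simple minorants,
   so monotonicity needs no measurability. *)
Lemma ge0_le_integral_nonmeas {R : realType} {dO : measure_display}
  {Omega : measurableType dO} (mu : {measure set Omega -> \bar R})
  (f g : Omega -> \bar R) :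
  (forall x, (0 <= f x)%E) -> (forall x, (f x <= g x)%E) ->
  (\int[mu]_x f x <= \int[mu]_x g x)%E.
Proof.
move=> f0 fg; have g0 x : (0 <= g x)%E by exact: le_trans (f0 x) (fg x).
rewrite !ge0_integralTE //; apply: ereal_sup_le => _ [h hf <-].
by exists h => //= x; exact: le_trans (hf x) (fg x).
Qed.

Section nneseries.
Local Open Scope ereal_scope.
Context {R : realType}.

Lemma nneseries_cst_gt0 (c : R) : (0 < c)%R -> \sum_(k <oo) c%:E = +oo.
Proof.
move=> c0; apply/eqyP => A A0; set n := (Num.truncn (A / c)).+1.
apply: le_trans (nneseries_lim_ge n _) => [|k _]; last by rewrite lee_fin ltW.
rewrite sumEFin big_const_nat subn0 iter_addr addr0 lee_fin.
rewrite -mulr_natr -ler_pdivrMl // mulrC; apply: ltW.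
by rewrite /n truncnS_gt.
Qed.

Lemma nneseries_geometric (a z : R) : (0 <= z)%R -> (z < 1)%R ->
  \sum_(k <oo) (a * z ^+ k)%:E = (a / (1 - z))%:E.
Proof.
move=> z0 z1; have z_lt1 : (`|z| < 1)%R by rewrite ger0_norm.
rewrite -(cvg_lim _ (@cvg_geometric_series _ a z z_lt1)) // -EFin_lim.
  by congr (limn _); apply/funext => n; rewrite /= sumEFin.
exact: (@is_cvg_geometric_series _ a z z_lt1).
Qed.

End nneseries.

Lemma size_obs_prefix {dX : measure_display} {X : measurableType dX}
  {dO : measure_display} {Omega : measurableType dO}
  (Y : nat -> Omega -> X) n w : size (obs_prefix Y n w) == n.
Proof. by rewrite /obs_prefix size_map size_iota. Qed.

Section detection_delay.
Local Open Scope ereal_scope.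
Context {R : realType} {Theta : Type} {d : Theta -> Theta -> R}
  {dX : measure_display} {X : measurableType dX} {Pth : Theta -> probability X R}
  {alpha : R} (alpha_gt0 : (0 < alpha)%R) (alpha_lt1 : (alpha < 1)%R)
  {CS : seq X -> set Theta}
  (CSm : CS_measurable d CS) (CSn : CS_nested CS)
  {wd : nat -> Theta -> R -> R} (w_width : pointwise_width d Pth CS wd alpha)
  {th0 th1 : Theta} {T : nat}
  {dO : measure_display} {Omega : measurableType dO} {P : probability Omega R}
  {Xs : nat -> Omega -> X}
  (mXs : forall i, measurable_fun [set: Omega] (Xs i))
  (Xs_indep : mutually_independent P Xs)
  (Xs_post : forall i A, (T <= i)%N -> measurable A ->
     P (Xs i @^-1` A) = Pth th1 A)
  {t : nat} (t_gt0 : (0 < t)%N) (wt_lt : (wd t th1 alpha < d th1 th0)%R).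

(* [block m] lists X_{m+t}, ..., X_{m+1} (that is, [Xs (m + t - 1)], ...,
   [Xs m]) and then the later observations: an i.i.d. post-change sequence, to
   which the width guarantee applies, whose length-t prefix is the block of
   data read backwards. *)
Definition block_idx m i := if (i < t)%N then ((m + t).-1 - i)%N else (m + t + i)%N.

Definition block_idx_inv m k :=
  if (k < m + t)%N then ((m + t).-1 - k)%N else (k - (m + t))%N.

Lemma block_idxK m : cancel (block_idx m) (block_idx_inv m).
Proof.
move=> i; rewrite /block_idx /block_idx_inv.
by have [it|it] := ltnP i t; [rewrite ifT|rewrite ifF]; lia.
Qed.

Lemma block_idx_ge m i : (m <= block_idx m i)%N.
Proof. by rewrite /block_idx; case: ltnP; lia. Qed.

Definition block m i := Xs (block_idx m i).

Lemma iid_block m : (T <= m)%N -> iid_with_law P (block m) (Pth th1).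
Proof.
move=> Tm; split => [i|| i A mA]; first exact: mXs.
  exact: (mutually_independent_reindex P Xs Xs_indep _ _ (block_idxK m)).
by apply: Xs_post => //; exact: leq_trans Tm (block_idx_ge m i).
Qed.

Lemma rev_obs_prefix_block m w : rev (obs_prefix Xs (m + t) w) =
  obs_prefix (block m) t w ++ rev (obs_prefix Xs m w).
Proof.
rewrite /obs_prefix iotaD map_cat rev_cat add0n -map_rev; congr (_ ++ _).
have -> : rev (iota m t) = map (block_idx m) (iota 0 t).
  apply: (@eq_from_nth _ 0%N); first by rewrite size_rev size_map !size_iota.
  move=> i; rewrite size_rev size_iota => it.
  rewrite nth_rev ?size_iota // (nth_map 0%N) ?size_iota // !nth_iota //; last lia.
  by rewrite /block_idx ifT //; lia.
by rewrite -map_comp.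
Qed.

Definition good_block m := [set w | forall th, CS (obs_prefix (block m) t w) th ->
  (d th1 th <= wd t th1 alpha)%R].

Lemma good_block_prob m : (T <= m)%N -> (1 - alpha)%:E <= P (good_block m).
Proof. by move=> Tm; exact: w_width th1 t t_gt0 _ _ P _ (iid_block m Tm). Qed.

Lemma good_block_sigma m : <<s cylinder Xs (iota m t) >> (good_block m).
Proof.
pose F w : t.-tuple X := Tuple (size_obs_prefix (block m) t w).
have -> : good_block m = F @^-1` [set x : t.-tuple X |
    forall th, CS (tval x) th -> (d th1 th <= wd t th1 alpha)%R] by [].
apply: preimage_tuple_sigma; last exact: (CSm t th1).2.
move=> i A mA; have -> : (fun w => tnth (F w) i) = Xs (block_idx m i).
  apply/funext => w; rewrite (tnth_nth (Xs 0 w)) /= /obs_prefix.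
  by rewrite (nth_map 0%N) ?size_iota // nth_iota.
apply: cylinder_preimage Xs _ _ _ _ mA; have := ltn_ord i.
by rewrite mem_iota /block_idx; case: ltnP; lia.
Qed.

(* Nestedness passes the width bound from the block to the whole backward set,
   and [w(t, th1) < d(th1, th0)] then excludes [th0]. *)
Lemma good_block_detects m w : good_block m w ->
  [set th0] `&` CS (rev (obs_prefix Xs (m + t) w)) = set0.
Proof.
move=> good; apply/seteqP; split => // _ [/= -> CSth0].
rewrite rev_obs_prefix_block in CSth0.
by have := good _ (CSn _ _ _ CSth0); rewrite leNgt wt_lt.
Qed.

Lemma delay_le_good_block m w : (T <= m)%N -> good_block m w ->
  delay CS th0 Xs T w <= ((m + t - T)%N%:R : R)%:E.
Proof.
move=> Tm good; rewrite /delay ge_max lee_fin ler0n andbT natrB; last lia.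
rewrite EFinB leeB //; apply: ereal_inf_lbound; exists (m + t)%N => //.
by split; [lia|exact: good_block_detects].
Qed.

Fixpoint no_good_block k : set Omega :=
  if k is k'.+1 then no_good_block k' `&` ~` good_block (T + k' * t) else setT.

Lemma no_good_blockP k w :
  no_good_block k w <-> forall j, (j < k)%N -> ~ good_block (T + j * t) w.
Proof.
elim: k => [|k IHk] /=; first by split => // _ [].
split => [[/IHk noj notk] j|noj].
  by rewrite ltnS leq_eqVlt => /orP[/eqP ->|/noj].
by split; [apply/IHk => j jk; apply: noj; lia | apply: noj].
Qed.

Lemma no_good_block_sigma k : <<s cylinder Xs (iota 0 (T + k * t)) >> (no_good_block k).
Proof.
elim: k => [|k IHk] /=; first by apply: sub_sigma_algebra; exact: cylinder_setT Xs _.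
pose G := cylinder Xs (iota 0 (T + k.+1 * t)).
have Hk : <<s G >> (no_good_block k).
  by apply: (sigma_cylinder_sub Xs _ _ _ _ IHk) => i; rewrite !mem_iota mulSn; lia.
have Gk : <<s G >> (good_block (T + k * t)).
  apply: (sigma_cylinder_sub Xs _ _ _ _ (good_block_sigma _)) => i.
  by rewrite !mem_iota mulSn; lia.
suff : measurable (no_good_block k `&` ~` good_block (T + k * t)
    : set (g_sigma_algebraType G)) by [].
by apply: measurableI => //; exact: measurableC.
Qed.

Lemma measurable_no_good_block k : measurable (no_good_block k).
Proof. exact: sigma_cylinder_measurable Xs mXs _ _ (no_good_block_sigma k). Qed.

(* Disjoint blocks of observations are independent, so each block fails with
   probability at most alpha independently of the earlier ones. *)
Lemma no_good_block_prob k : P (no_good_block k) <= (alpha ^+ k)%:E.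
Proof.
elim: k => [|k IHk] /=; first by rewrite probability_setT expr0.
have m_good : measurable (good_block (T + k * t)).
  exact: sigma_cylinder_measurable Xs mXs _ _ (good_block_sigma _).
rewrite (sigma_cylinder_indep P Xs mXs Xs_indep _ _ _ _ (iota_uniq _ _)
  (iota_uniq _ _) _ (no_good_block_sigma k) (sigma_algebraC (good_block_sigma _)));
  last first.
  by move=> i /=; rewrite !mem_iota; lia.
rewrite exprSr EFinM; apply: lee_pmul => //.
have := good_block_prob _ (leq_addr (k * t) T).
rewrite probability_setC // -(fineK (fin_num_measure P _ m_good)) -EFinB !lee_fin.
lra.
Qed.

Definition delay_bound w := \sum_(k <oo) ((t%:R : R) * \1_(no_good_block k) w)%:E.

Lemma delay_le_bound w : delay CS th0 Xs T w <= delay_bound w.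
Proof.
have term_ge0 k : 0 <= ((t%:R : R) * \1_(no_good_block k) w)%:E.
  by rewrite lee_fin mulr_ge0.
have [exj|never] := pselect (exists j, `[< good_block (T + j * t) w >]).
  case: (ex_minnP exj) => j0 /asboolP good_j0 j0_min.
  have no_before k : (k <= j0)%N -> no_good_block k w.
    by move=> kj0; apply/no_good_blockP => i ik /asboolT /j0_min; lia.
  apply: le_trans (delay_le_good_block _ _ (leq_addr _ _) good_j0) _.
  apply: le_trans (nneseries_lim_ge j0.+1 (fun k _ _ => term_ge0 k)).
  rewrite (@eq_big_nat _ _ _ 0 j0.+1 _ (fun=> (t%:R : R)%:E)); last first.
    by move=> k /andP[_ kj0]; rewrite indicE mem_set ?mulr1 //; exact: no_before.
  rewrite sumEFin big_const_nat iter_addr addr0 subn0 lee_fin -mulrnA ler_nat.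
  lia.
have no_ever k : no_good_block k w.
  by apply/no_good_blockP => j _ goodj; apply: never; exists j; exact/asboolP.
rewrite /delay_bound (eq_eseriesr (g := fun=> (t%:R : R)%:E)).
  by rewrite nneseries_cst_gt0 ?ltr0n // leey.
by move=> k _; rewrite indicE mem_set // mulr1.
Qed.

Lemma integral_delay_bound :
  \int[P]_w delay_bound w <= ((t%:R : R) / (1 - alpha))%:E.
Proof.
rewrite integral_nneseries //; last first.
  move=> k; apply/measurable_EFinP/measurable_funM; first exact: measurable_cst.
  exact: measurable_indic (measurable_no_good_block k).
rewrite -nneseries_geometric ?(ltW alpha_gt0) //.
apply: lee_nneseries => [k _ _|k _].
  by apply: integral_ge0 => w _; rewrite lee_fin mulr_ge0.
rewrite (integralZl_indic _ (fun=> no_good_block k)) //; last 2 first.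
- by rewrite ltNge ler0n.
- exact: measurable_no_good_block.
rewrite integral_indic ?setIT ?EFinM //; last exact: measurable_no_good_block.
by apply: lee_wpmul2l; [rewrite lee_fin|exact: no_good_block_prob].
Qed.

Lemma integral_delay_le :
  \int[P]_w delay CS th0 Xs T w <= ((t%:R : R) / (1 - alpha))%:E.
Proof.
apply: le_trans integral_delay_bound.
apply: ge0_le_integral_nonmeas delay_le_bound => w.
by rewrite /delay le_max lexx orbT.
Qed.

End detection_delay.

Lemma t0_cases {R : realType} {Theta : Type} (d : Theta -> Theta -> R)
  (wd : nat -> Theta -> R -> R) (alpha : R) (th0 th1 : Theta) :
  t0 d wd alpha th0 th1 = +oo%E \/
  exists2 t, (0 < t)%N /\ wd t th1 alpha < d th1 th0 &
             t0 d wd alpha th0 th1 = (t%:R)%:E.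
Proof.
have [ex|none] := pselect (exists t, (0 < t)%N && (wd t th1 alpha < d th1 th0)).
  right; case: (ex_minnP ex) => t /andP[t_gt0 wt_lt] t_min; exists t => //.
  apply/eqP; rewrite eq_le ereal_inf_lbound /=; last by exists t.
  apply/ereal_infP => _ [s [s_gt0 ws_lt] <-]; rewrite lee_fin ler_nat.
  by apply: t_min; rewrite s_gt0 ws_lt.
left; apply/ereal_inf_pinfty => _ [s [s_gt0 ws_lt] <-].
by exfalso; apply: none; exists s; rewrite s_gt0 ws_lt.
Qed.

Theorem corollary1 (R : realType)
  (Theta : Type) (d : Theta -> Theta -> R) (hd : is_metric d)
  (dX : measure_display) (X : measurableType dX)
  (Pth : Theta -> probability X R)
  (alpha : R) (halpha0 : 0 < alpha) (halpha1 : alpha < 1)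
  (CS : seq X -> set Theta)
  (hCSm : CS_measurable d CS) (hCSn : CS_nested CS)
  (hCSl : CS_level Pth CS alpha)
  (wd : nat -> Theta -> R -> R) (hw : pointwise_width d Pth CS wd alpha)
  (th0 th1 : Theta) (hneq : th0 <> th1) (T : nat)
  (dO : measure_display) (Omega : measurableType dO) (P : probability Omega R)
  (Xs : nat -> Omega -> X)
  (hXm : forall i, measurable_fun [set: Omega] (Xs i))
  (hXind : mutually_independent P Xs)
  (hpre : forall i A, (i < T)%N -> measurable A -> P (Xs i @^-1` A) = Pth th0 A)
  (hpost : forall i A, (T <= i)%N -> measurable A -> P (Xs i @^-1` A) = Pth th1 A) :
  (\int[P]_w delay CS th0 Xs T w <=
     ((3 / (1 - alpha))%:E * t0 d wd alpha th0 th1))%E.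
Proof.
have h1alpha : 0 < 1 - alpha by rewrite subr_gt0.
have [t0_oo|[t [t_gt0 wt_lt] t0E]] := t0_cases d wd alpha th0 th1.
  by rewrite t0_oo muleC gt0_mulye ?leey // lte_fin divr_gt0.
apply: le_trans (integral_delay_le halpha0 halpha1 hCSm hCSn hw hXm hXind hpost
  t_gt0 wt_lt) _.
rewrite t0E -EFinM lee_fin mulrAC ler_pM2r ?invr_gt0 //.
by rewrite ler_peMl // ler1n.
Qed.
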